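(* In the setting $|H|=1$ of the context (with Assumption 1), the Shor relaxation is exact ($v^\star=c^\star$) if for every $I\subseteq M$ with $|I|\ge2$ the convex problem in the variables $(\mu_i)_{i\in I}$, $x_1$, $w_1$: $\min\ \sum_{j\in N\setminus\{1\}}x_j(\boldsymbol{\mu})^2+x_1^2-w_1$ subject to $d_1^*+\sum_{i\in I}\xi_i\mu_i=0$; $c_1+\sum_{i\in I}a_{i1}\mu_i=0$; $\xi_iw_1+2a_{i1}x_1+2\sum_{j\in N\setminus\{1\}}a_{ij}x_j(\boldsymbol{\mu})=b_i$ for $i\in I$; $\xi_iw_1+2a_{i1}x_1+2\sum_{j\in N\setminus\{1\}}a_{ij}x_j(\boldsymbol{\mu})\le b_i$ for $i\in M\setminus I$; $\mu_i\ge0$ for $i\in I$, (where $\mu_i=0$ for $i\in M\setminus I$) has nonnegative optimal value (with the convention that an infeasible problem has optimal value $+\infty$).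
   Context: Let $N=\{1,\dots,n\}$, $M=\{1,\dots,m\}$. Data: reals $D_{jj}$ ($j\in N$), $c_j$, $a_{ij}$, $b_i$, $\xi_i$ ($i\in M$, $j\in N$). The diagonal QCQP (P) is $c^\star=\inf\{\sum_{j}D_{jj}x_j^2+2\sum_jc_jx_j : \xi_i\sum_jx_j^2+2\sum_ja_{ij}x_j\le b_i,\ i\in M\}$, i.e. all constraint Hessians are ${\bf A}^i=\xi_i{\bf I}$. Its Shor relaxation is $v^\star=\inf\{{\bf D}\bullet{\bf X}+2{\bf c}^\top{\bf x} : \xi_i\,\mathrm{trace}({\bf X})+2{\bf a}_i^\top{\bf x}\le b_i\ (i\in M),\ {\bf X}-{\bf x}{\bf x}^\top\succeq{\bf O}\}$ with ${\bf D}=\mathrm{diag}(D_{jj})$. Assumption 1: (P) is feasible; some $\bar{\bf y}\ge0$ has $\sum_i\bar y_i\xi_i>0$; the Shor relaxation has a feasible point in the interior of its feasible region. It is assumed that $d_1^*=\min_{j\in N}D_{jj}$ is attained uniquely at $j=1$. For $j\in N\setminus\{1\}$, $x_j(\boldsymbol{\mu})=-\frac{c_j+\sum_{i\in M}a_{ij}\mu_i}{D_{jj}-d_1^*}$. *)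

From HB Require Import structures.
From mathcomp Require Import all_boot all_order all_algebra.
From mathcomp Require Import all_classical all_reals.
From mathcomp Require Import ereal.
Set Implicit Arguments. Unset Strict Implicit. Unset Printing Implicit Defensive.
Import Order.TTheory GRing.Theory Num.Theory.
Local Open Scope ring_scope.
Local Open Scope classical_set_scope.

(* Index j = 1 of the paper is ord0 : 'I_n.+1; N = 'I_n.+1, M = 'I_m.
   Data: D (diagonal of the objective Hessian), c, a, b, xi. *)
Section QCQP.
Variables (R : realType) (n m : nat).
Variables (D c : 'I_n.+1 -> R) (a : 'I_m -> 'I_n.+1 -> R) (b xi : 'I_m -> R).

Definition qobj (x : 'I_n.+1 -> R) : R :=
  \sum_j D j * x j ^+ 2 + 2 * \sum_j c j * x j.

Definition Pfeas (x : 'I_n.+1 -> R) : Prop :=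
  forall i : 'I_m, xi i * \sum_j x j ^+ 2 + 2 * \sum_j a i j * x j <= b i.

(* c^star (value in the extended reals; -oo if unbounded, +oo if infeasible). *)
Definition cstar : \bar R := ereal_inf [set (qobj x)%:E | x in Pfeas].

Definition psd (A : 'M[R]_n.+1) : Prop :=
  forall v : 'cV[R]_n.+1, 0 <= (v^T *m A *m v) 0 0.
Definition pd (A : 'M[R]_n.+1) : Prop :=
  forall v : 'cV[R]_n.+1, v != 0 -> 0 < (v^T *m A *m v) 0 0.

Definition outer (x : 'I_n.+1 -> R) : 'M[R]_n.+1 := \matrix_(i, j) (x i * x j).

Definition shor_obj (x : 'I_n.+1 -> R) (X : 'M[R]_n.+1) : R :=
  \sum_j D j * X j j + 2 * \sum_j c j * x j.

Definition Shor_feas (x : 'I_n.+1 -> R) (X : 'M[R]_n.+1) : Prop :=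
  [/\ X^T = X,
      (forall i : 'I_m, xi i * \tr X + 2 * \sum_j a i j * x j <= b i)
    & psd (X - outer x)].

Definition vstar : \bar R :=
  ereal_inf [set (shor_obj p.1 p.2)%:E | p in [set p | Shor_feas p.1 p.2]].

Definition Shor_interior (x : 'I_n.+1 -> R) (X : 'M[R]_n.+1) : Prop :=
  [/\ X^T = X,
      (forall i : 'I_m, xi i * \tr X + 2 * \sum_j a i j * x j < b i)
    & pd (X - outer x)].

Definition assumption1 : Prop :=
  [/\ exists x, Pfeas x,
      (exists ybar : 'I_m -> R, (forall i, 0 <= ybar i) /\ 0 < \sum_i ybar i * xi i)
    & exists x X, Shor_interior x X].

Definition d1 : R := D ord0.

Definition xmu (mu : 'I_m -> R) (j : 'I_n.+1) : R :=
  - (c j + \sum_i a i j * mu i) / (D j - d1).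

(* Feasible set of the convex subproblem for the index set I, in variables
   (mu_i)_{i in I} (encoded as mu : 'I_m -> R vanishing outside I), x1, w1. *)
Definition sub_feas (I : {set 'I_m}) (mu : 'I_m -> R) (x1 w1 : R) : Prop :=
 (forall i, i \notin I -> mu i = 0) /\
  [/\ d1 + \sum_(i in I) xi i * mu i = 0,
      c ord0 + \sum_(i in I) a i ord0 * mu i = 0,
      (forall i, i \in I ->
         xi i * w1 + 2 * a i ord0 * x1
           + 2 * \sum_(j | j != ord0) a i j * xmu mu j = b i),
      (forall i, i \notin I ->
         xi i * w1 + 2 * a i ord0 * x1
           + 2 * \sum_(j | j != ord0) a i j * xmu mu j <= b i)
    & (forall i, i \in I -> 0 <= mu i)].

Definition sub_obj (mu : 'I_m -> R) (x1 w1 : R) : R :=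
  \sum_(j | j != ord0) xmu mu j ^+ 2 + x1 ^+ 2 - w1.

(* Optimal value (inf over an empty set is +oo). *)
Definition sub_val (I : {set 'I_m}) : \bar R :=
  ereal_inf [set (sub_obj t.1.1 t.1.2 t.2)%:E
            | t in [set t | sub_feas I t.1.1 t.1.2 t.2]].

End QCQP.

From HB Require Import structures.
From mathcomp Require Import all_boot all_order all_algebra.
From mathcomp Require Import all_classical all_reals.
From mathcomp Require Import ereal.
From mathcomp Require Import all_analysis.
From mathcomp Require Import ring lra.
Import Order.TTheory GRing.Theory Num.Theory.
Import numFieldNormedType.Exports.
Set Implicit Arguments. Unset Strict Implicit. Unset Printing Implicit Defensive.
Local Open Scope ring_scope.

(* Writing w for ||x||^2, the objective of (P) becomes the lifted objective
   g(x, w) = D_11 w + sum_j ((D_jj - D_11) x_j^2 + 2 c_j x_j), convex in x and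
   affine in w, and the constraints become affine in (x, w).  A Shor-feasible
   (x, X) gives the point (x, tr X) of the convex relaxation
   K = {(x, w) | affine constraints, ||x||^2 <= w} with g(x, tr X) below the
   Shor objective, while X = x x^T gives v* <= c*.  It thus suffices to show
   g >= c* on K.  If some p in K had g(p) < c*, then:
   - K is compact (Assumption 1 bounds it), so g has a minimizer s on K;
   - points of the polyhedron no worse than p lie strictly above the
     paraboloid (a segment argument), so s minimizes g on the polyhedron, and
     Farkas' lemma yields KKT multipliers mu at s;
   - in the plane of (x_1, w), the face where the mu-charged constraints stay
     active keeps g constant, hence lies above the parabola, and a planar
     vertex argument finds a point of it with two active constraints;
   - that point is feasible for the subproblem of its active set, with
     negative objective, against the hypothesis. *)

Section Farkas.
Variable R : realFieldType.

Definition dot {T : finType} (u v : T -> R) : R := \sum_t u t * v t.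

Lemma dot_subl (T : finType) (u w d : T -> R) (k : R) :
  dot (fun t => u t - k * w t) d = dot u d - k * dot w d.
Proof. by rewrite /dot mulr_sumr -sumrB; apply: eq_bigr => t _; ring. Qed.

Lemma dot_subr (T : finType) (u d d' : T -> R) (k : R) :
  dot u (fun t => d' t - k * d t) = dot u d' - k * dot u d.
Proof. by rewrite /dot mulr_sumr -sumrB; apply: eq_bigr => t _; ring. Qed.

Lemma dot_self_gt0 (T : finType) (c : T -> R) (t0 : T) : c t0 != 0 -> 0 < dot c c.
Proof.
move=> ct0; rewrite /dot (bigD1 t0) //= ltr_pwDl ?mulf_gt0 // -?expr2.
  by rewrite lt0r sqrf_eq0 ct0 sqr_ge0.
by apply: sumr_ge0 => t _; rewrite -expr2 sqr_ge0.
Qed.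

Variables (T I : finType).

Definition cone_comb (s : seq I) (v : I -> T -> R) (c : T -> R) : Prop :=
  exists lam : I -> R, [/\ forall i, 0 <= lam i, forall i, i \notin s -> lam i = 0
    & forall t, c t = \sum_i lam i * v i t].

Definition separating (s : seq I) (v : I -> T -> R) (c : T -> R) : Prop :=
  exists d : T -> R, (forall i, i \in s -> dot (v i) d <= 0) /\ 0 < dot c d.

Section ProjectionStep.
(* Elimination of a vector v k having positive pairing r with a direction d:
   every vector is projected along v k onto the hyperplane orthogonal to d. *)
Variables (k : I) (v : I -> T -> R) (c d : T -> R).
Let r := dot (v k) d.
Hypothesis r_gt0 : 0 < r.
Let proj (u : T -> R) : T -> R := fun t => u t - dot u d / r * v k t.

Lemma lift_cone_comb (s : seq I) :
  (forall i, i \in s -> dot (v i) d <= 0) -> 0 < dot c d ->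
  cone_comb s (fun i => proj (v i)) (proj c) -> cone_comb (k :: s) v c.
Proof.
move=> vd_le0 cd_gt0 [lam [lam_ge0 lam_out lam_c]].
pose ka := (dot c d - \sum_i lam i * dot (v i) d) / r.
have ka_gt0 : 0 < ka.
  apply: divr_gt0 => //; rewrite subr_gt0; apply: le_lt_trans cd_gt0.
  apply: sumr_le0 => i _; have [/vd_le0 vi|/lam_out ->] := boolP (i \in s).
    by rewrite mulr_ge0_le0.
  by rewrite mul0r.
exists (fun i => lam i + (if i == k then ka else 0)); split.
- by move=> i; rewrite addr_ge0 //; case: ifP => // _; exact: ltW.
- by move=> i; rewrite in_cons negb_or => /andP[/negbTE -> /lam_out ->]; rewrite addr0.
move=> t; rewrite (eq_bigr (fun i => lam i * v i t + (if i == k then ka else 0) * v i t));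
  last by move=> i _; rewrite mulrDl.
rewrite big_split /= [X in _ + X](bigD1 k) //= eqxx [X in _ + (_ + X)]big1 ?addr0; last first.
  by move=> i /negbTE ->; rewrite mul0r.
have := lam_c t; rewrite /proj.
rewrite (eq_bigr (fun i => lam i * v i t - lam i * dot (v i) d / r * v k t));
  last by move=> i _; rewrite mulrBr !mulrA.
rewrite sumrB -mulr_suml -mulr_suml => ct.
by rewrite -[c t](subrK (dot c d / r * v k t)) ct /ka; field; rewrite gt_eqF.
Qed.

Lemma lift_separating (s : seq I) :
  separating s (fun i => proj (v i)) (proj c) -> separating (k :: s) v c.
Proof.
move=> [d' [d'_le0 d'_gt0]].
have r_neq0 : r != 0 by rewrite gt_eqF.
exists (fun t => d' t - dot (v k) d' / r * d t); split; last first.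
  by rewrite dot_subr -/r; move: d'_gt0; rewrite /proj dot_subl; congr (0 < _); field.
move=> i; rewrite in_cons => /orP[/eqP->|i_s].
  by rewrite dot_subr -/r mulfVK // subrr.
rewrite dot_subr; move: (d'_le0 i i_s); rewrite /proj dot_subl.
by congr (_ <= 0); ring.
Qed.
End ProjectionStep.

Lemma farkas (s : seq I) (v : I -> T -> R) (c : T -> R) :
  cone_comb s v c \/ separating s v c.
Proof.
elim: s v c => [|k s IH] v c.
  have [c0|c0] := boolP [forall t, c t == 0].
    left; exists (fun=> 0); split=> // t.
    by rewrite big1 ?(eqP (forallP c0 t)) // => i _; rewrite mul0r.
  by move/forallPn: c0 => [t0 ct0]; right; exists c; split=> //; exact: dot_self_gt0 ct0.
have [[lam [lam_ge0 lam_out lam_c]]|[d [vd_le0 cd_gt0]]] := IH v c.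
  left; exists lam; split=> // i; rewrite in_cons negb_or => /andP[_]; exact: lam_out.
have [vkd_le0|vkd_gt0] := lerP (dot (v k) d) 0.
  right; exists d; split=> // i; rewrite in_cons => /orP[/eqP->//|]; exact: vd_le0.
have [comb|sep] := IH (fun i t => v i t - dot (v i) d / dot (v k) d * v k t)
                      (fun t => c t - dot c d / dot (v k) d * v k t).
  by left; exact: lift_cone_comb comb.
by right; exact: lift_separating sep.
Qed.
End Farkas.

Lemma quadratic_eventually_ge0 (R : realFieldType) (A B C : R) :
  0 < A \/ (A = 0 /\ 0 < B) -> exists2 t, 0 <= t & 0 <= A * t ^+ 2 + B * t + C.
Proof.
case=> [A_gt0|[-> B_gt0]]; last first.
  exists (`|C| / B); first by rewrite divr_ge0 // ltW.
  rewrite mul0r add0r mulrC divfK ?gt_eqF //.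
  by have := ler_norm (- C); rewrite normrN; lra.
pose t := 1 + (`|B| + `|C|) / A.
have t_ge1 : 1 <= t by rewrite lerDl divr_ge0 // ?addr_ge0 // ltW.
have At : A * t = A + `|B| + `|C| by rewrite /t; field; rewrite gt_eqF.
exists t; first exact: le_trans ler01 t_ge1.
have hB := ler_norm (- B); have hC := ler_norm (- C); rewrite !normrN in hB hC.
have : 0 <= (t - 1) * (A + `|C|) by rewrite mulr_ge0 ?subr_ge0 // addr_ge0 // ltW.
have : t * (- `|B| - B) <= 0 by rewrite mulr_ge0_le0 ?(le_trans ler01 t_ge1) //; lra.
rewrite expr2 mulrA At; nra.
Qed.

Lemma ray_leaves_epigraph (R : realFieldType) (u v du dv : R) :
  (du != 0) || (dv < 0) -> exists2 t, 0 <= t & v + t * dv <= (u + t * du) ^+ 2.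
Proof.
move=> dir.
have [t t_ge0 q_ge0] : exists2 t, 0 <= t &
    0 <= du ^+ 2 * t ^+ 2 + (2 * u * du - dv) * t + (u ^+ 2 - v).
  apply: quadratic_eventually_ge0; have [du0|du_neq0] := eqVneq du 0.
    by move: dir; rewrite du0 eqxx /= => dv_lt0; right; split; [rewrite expr2 mul0r|lra].
  by left; rewrite exprn_even_gt0.
exists t => //; rewrite -subr_ge0.
suff -> : (u + t * du) ^+ 2 - (v + t * dv) =
    du ^+ 2 * t ^+ 2 + (2 * u * du - dv) * t + (u ^+ 2 - v) by [].
by ring.
Qed.

Section PlanarVertex.
Variables (R : realFieldType) (m : nat).
Variables (L : 'I_m -> R -> R -> R) (e f mu : 'I_m -> R).
Hypothesis L_affine : forall i u v du dv t,
  L i (u + t * du) (v + t * dv) = L i u v + t * (e i * du + f i * dv).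

Definition on_face (u v : R) : Prop :=
  (forall i, L i u v <= 0) /\ (forall i, mu i != 0 -> L i u v = 0).

Definition active (u v : R) : {set 'I_m} := [set i | L i u v == 0].

Hypothesis face_in_epigraph : forall u v, on_face u v -> u ^+ 2 < v.

Section Ray.
Variables (u v du dv : R).
Hypothesis face_uv : on_face u v.
Hypothesis keeps_active : forall i, L i u v = 0 -> e i * du + f i * dv = 0.
Hypothesis moving : (du != 0) || (dv < 0).

Let slope i := e i * du + f i * dv.
Let blocking i := (L i u v != 0) && (0 < slope i).

Lemma ray_nonblocking t i : 0 <= t -> ~~ blocking i ->
  L i (u + t * du) (v + t * dv) <= 0 /\
  (L i u v = 0 -> L i (u + t * du) (v + t * dv) = 0).
Proof.
move=> t_ge0 nblock; rewrite L_affine -/(slope i).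
have [Li0|Li_neq0] := eqVneq (L i u v) 0.
  by rewrite Li0 /slope (keeps_active Li0) mulr0 addr0.
move: nblock; rewrite /blocking Li_neq0 /= -leNgt => slope_le0.
split=> [|Li0]; last by move: Li_neq0; rewrite Li0 eqxx.
by have := proj1 face_uv i; have := mulr_ge0_le0 t_ge0 slope_le0; lra.
Qed.

(* Since the ray must leave the face, some constraint blocks it. *)
Lemma ray_blocked : exists i, blocking i.
Proof.
apply/existsP; apply: contraT => /existsPn nblock.
have [t t_ge0 leaves] := ray_leaves_epigraph u v moving.
suff : (u + t * du) ^+ 2 < v + t * dv by rewrite ltNge leaves.
apply: face_in_epigraph; split=> i; first by case: (ray_nonblocking t_ge0 (nblock i)).
by move=> /(proj2 face_uv) Li0; case: (ray_nonblocking t_ge0 (nblock i)) => _ /(_ Li0).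
Qed.

(* Moving along the ray up to the first blocking constraint gives a point of
   the face with strictly more active constraints. *)
Lemma advance_to_new_constraint : exists u' v', [/\ on_face u' v',
  {subset active u v <= active u' v'} & exists2 i0, i0 \notin active u v & i0 \in active u' v'].
Proof.
have [i0 block_i0] := ray_blocked.
have [i1 block_i1 i1_min] := arg_minP (fun i => - L i u v / slope i) block_i0.
move: (block_i1) => /andP[Li1_neq0 slope_i1].
pose t := - L i1 u v / slope i1.
have t_ge0 : 0 <= t by rewrite divr_ge0 ?oppr_ge0 ?(proj1 face_uv) // ltW.
have step i : L i (u + t * du) (v + t * dv) <= 0 /\
    (L i u v = 0 -> L i (u + t * du) (v + t * dv) = 0).
  have [block_i|] := boolP (blocking i); last exact: ray_nonblocking.
  move: (block_i) => /andP[Li_neq0 slope_i]; split=> [|Li0]; last by rewrite Li0 eqxx in Li_neq0.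
  rewrite L_affine -/(slope i); have := i1_min i block_i.
  by rewrite -/t ler_pdivlMr // => h; lra.
exists (u + t * du), (v + t * dv); split.
- split=> i; first by case: (step i).
  by move=> /(proj2 face_uv) Li0; case: (step i) => _ /(_ Li0).
- by move=> i; rewrite !inE => /eqP /(proj2 (step i)) ->.
exists i1; first by rewrite inE.
by rewrite inE L_affine -/(slope i1) /t divfK ?addrN // gt_eqF.
Qed.
End Ray.

(* Moving sideways from a point of the face with no active constraint
   reaches a point of the face with an active constraint. *)
Lemma face_point_with_active u v : on_face u v ->
  exists u' v', on_face u' v' /\ (0 < #|active u' v'|)%N.
Proof.
move=> face_uv; have [no_active|] := posnP #|active u v|; last by exists u, v.
have inactive i : L i u v = 0 -> False.
  by move=> Li0; move/eqP: no_active; rewrite cards_eq0 => /eqP/setP/(_ i); rewrite !inE Li0 eqxx.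
have keeps i : L i u v = 0 -> e i * 1 + f i * 0 = 0 by move=> /inactive.
have moving : (1 != 0 :> R) || (0 < 0 :> R) by rewrite oner_neq0.
have [u' [v' [face' _ [i0 _ act_i0]]]] := advance_to_new_constraint face_uv keeps moving.
by exists u', v'; split=> //; apply/card_gt0P; exists i0.
Qed.

(* From a point with a single active constraint i, moving along the line
   L i = 0 activates a second constraint. *)
Lemma face_vertex u v : on_face u v ->
  exists u' v', on_face u' v' /\ (1 < #|active u' v'|)%N.
Proof.
move=> /face_point_with_active [u1 [v1 [face1 act1]]].
have [|card_le1] := ltnP 1 #|active u1 v1|; first by exists u1, v1.
have /cards1P [i act_eq] : #|active u1 v1| == 1%N by rewrite eqn_leq card_le1 act1.
have only_i k : L k u1 v1 = 0 -> k = i.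
  by move=> Lk0; apply/set1P; rewrite -act_eq inE Lk0.
pose du := if f i != 0 then f i else 0.
pose dv := if f i != 0 then - e i else -1.
have moving : (du != 0) || (dv < 0).
  by rewrite /du /dv; case: ifP => [->//|_]; rewrite eqxx /= ltrN10.
have keeps k : L k u1 v1 = 0 -> e k * du + f k * dv = 0.
  move=> /only_i ->; rewrite /du /dv; case: ifP => [_|/negbFE/eqP ->]; first by ring.
  by rewrite mulr0 mul0r addr0.
have [u2 [v2 [face2 keep [i0 new0 act0]]]] := advance_to_new_constraint face1 keeps moving.
exists u2, v2; split=> //; apply/card_gt1P; exists i, i0; split=> //.
  by apply: keep; rewrite act_eq set11.
by apply: contraNneq new0 => <-; rewrite act_eq set11.
Qed.

End PlanarVertex.

Lemma quadratic_continuous (R : realType) (A B C : R) :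
  continuous (fun t : R => A + t * B - t ^+ 2 * C).
Proof.
move=> t; apply: cvgB; first apply: cvgD.
- exact: cvg_cst.
- by apply: cvgM; [exact: cvg_id | exact: cvg_cst].
- apply: cvgM; last exact: cvg_cst.
  by under eq_fun do rewrite expr2; apply: cvgM; exact: cvg_id.
Qed.

Section PointwiseContinuity.
Local Open Scope classical_set_scope.
Variables (R : realType) (T : topologicalType).

Lemma continuous_add (f g : T -> R) :
  continuous f -> continuous g -> continuous (fun z => f z + g z).
Proof. by move=> fc gc z; apply: (@continuousD _ _ _ f g); [exact: fc | exact: gc]. Qed.

Lemma continuous_sub (f g : T -> R) :
  continuous f -> continuous g -> continuous (fun z => f z - g z).
Proof. by move=> fc gc z; apply: (@continuousB _ _ _ f g); [exact: fc | exact: gc]. Qed.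

Lemma continuous_mul (f g : T -> R) :
  continuous f -> continuous g -> continuous (fun z => f z * g z).
Proof. by move=> fc gc z; apply: (@continuousM _ _ f g); [exact: fc | exact: gc]. Qed.

Lemma continuous_sum (I : finType) (F : I -> T -> R) :
  (forall i, continuous (F i)) -> continuous (fun z => \sum_i F i z).
Proof.
move=> Fc; rewrite -fct_sumE; apply: (big_ind (fun f : T -> R => continuous f)) => //.
- exact: cst_continuous.
- by move=> f g fc gc; exact: continuous_add.
Qed.

Lemma closed_sublevel (f : T -> R) : continuous f -> closed [set z | f z <= 0].
Proof.
move=> fc; apply: (@preimage_closed _ _ f [set y : R | y <= 0]) => [z _|].
  exact: fc.
exact: closed_le.
Qed.

End PointwiseContinuity.

Lemma abs_le_of_sqr (R : realFieldType) (y Y : R) : y ^+ 2 <= Y -> `|y| <= 1 + Y.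
Proof.
move=> sqr_le; have [y_le1|y_gt1] := leP `|y| 1.
  by apply: le_trans y_le1 _; rewrite lerDl (le_trans (sqr_ge0 y)).
have : `|y| <= `|y| ^+ 2 by rewrite expr2 ler_peMl // ltW.
by rewrite real_normK ?num_real //; lra.
Qed.

Lemma common_step (R : realFieldType) (I : finType) (M0 : R) (M : I -> R) :
  0 <= M0 -> (forall i, 0 <= M i) ->
  exists2 t, 0 < t & t * M0 <= 1 /\ forall i, t * M i <= 1.
Proof.
move=> M0_ge0 M_ge0; have S_ge0 : 0 <= \sum_i M i by exact: sumr_ge0.
have tot_gt0 : 0 < 1 + M0 + \sum_i M i by lra.
exists (1 + M0 + \sum_i M i)^-1; first by rewrite invr_gt0.
split=> [|i]; rewrite mulrC ler_pdivrMr // mul1r; first by lra.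
have : M i <= \sum_i M i by rewrite (bigD1 i) //= lerDl sumr_ge0.
by lra.
Qed.

(* Threshold for an affine constraint L + t * r <= 0 along a small step: if
   the constraint is slack the step is bounded by -L / |r|, if it is tight the
   slope r must be nonpositive. *)
Definition step_bound (R : realFieldType) (L r : R) : R :=
  if L < 0 then `|r| / - L else 0.

Lemma step_bound_ge0 (R : realFieldType) (L r : R) : 0 <= step_bound L r.
Proof. by rewrite /step_bound; case: ifP => // L_lt0; rewrite divr_ge0 // oppr_ge0 ltW. Qed.

Lemma affine_step_le0 (R : realFieldType) (L r t : R) : L <= 0 -> (L = 0 -> r <= 0) ->
  0 < t -> t * step_bound L r <= 1 -> L + t * r <= 0.
Proof.
move=> L_le0 tight t_gt0; rewrite /step_bound; have [L_lt0|] := ltP L 0; last first.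
  move=> L_ge0 _; have L0 : L = 0 by apply/le_anti; rewrite L_le0 L_ge0.
  by rewrite L0 add0r; apply: mulr_ge0_le0; [exact: ltW | exact: tight].
rewrite mulrA ler_pdivrMr ?oppr_gt0 // mul1r => step.
by have := ler_norm r; have := ltW t_gt0; nra.
Qed.

Lemma quadratic_step_lt0 (R : realFieldType) (alpha Q t : R) : alpha < 0 -> 0 <= Q ->
  0 < t -> t * (2 * Q / - alpha) <= 1 -> t * alpha + t ^+ 2 * Q < 0.
Proof.
move=> alpha_lt0 Q_ge0 t_gt0; rewrite mulrA ler_pdivrMr ?oppr_gt0 // mul1r => step.
by rewrite expr2; nra.
Qed.

Section LiftedProblem.
Variables (R : realType) (n m : nat).
Variables (D c : 'I_n.+1 -> R) (a : 'I_m -> 'I_n.+1 -> R) (b xi : 'I_m -> R).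
Local Notation D1 := (D ord0).

Definition sqnorm (x : 'I_n.+1 -> R) : R := \sum_j x j ^+ 2.

Definition constr (i : 'I_m) (x : 'I_n.+1 -> R) (w : R) : R :=
  \sum_j 2 * a i j * x j + xi i * w - b i.

Definition gobj (x : 'I_n.+1 -> R) (w : R) : R :=
  \sum_j ((D j - D1) * x j ^+ 2 + 2 * c j * x j) + D1 * w.

Definition in_poly (x : 'I_n.+1 -> R) (w : R) : Prop := forall i, constr i x w <= 0.
Definition in_relax (x : 'I_n.+1 -> R) (w : R) : Prop := in_poly x w /\ sqnorm x <= w.

Lemma sqnorm_ge0 x : 0 <= sqnorm x.
Proof. by apply: sumr_ge0 => j _; rewrite sqr_ge0. Qed.

Lemma qobj_gobj x : qobj D c x = gobj x (sqnorm x).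
Proof. by rewrite /qobj /gobj /sqnorm !mulr_sumr -!big_split /=; apply: eq_bigr => j _; ring. Qed.

Lemma constrE i x w : constr i x w = xi i * w + 2 * \sum_j a i j * x j - b i.
Proof.
rewrite /constr.
have -> : \sum_j 2 * a i j * x j = 2 * \sum_j a i j * x j.
  by rewrite mulr_sumr; apply: eq_bigr => j _; rewrite mulrA.
ring.
Qed.

Lemma Pfeas_in_poly x : Pfeas a b xi x <-> in_poly x (sqnorm x).
Proof. by split=> feas i; have := feas i; rewrite constrE subr_le0. Qed.

Definition shift (x dx : 'I_n.+1 -> R) (t : R) : 'I_n.+1 -> R := fun j => x j + t * dx j.

Lemma constr_shift i x w dx dw t : constr i (shift x dx t) (w + t * dw) =
  constr i x w + t * (\sum_j 2 * a i j * dx j + xi i * dw).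
Proof.
rewrite /constr /shift !mulrDr mulr_sumr.
have -> : \sum_j 2 * a i j * (x j + t * dx j) =
    \sum_j 2 * a i j * x j + \sum_j t * (2 * a i j * dx j).
  by rewrite -big_split; apply: eq_bigr => j _ /=; ring.
ring.
Qed.

Lemma gobj_shift x w dx dw t : gobj (shift x dx t) (w + t * dw) = gobj x w
  + t * (\sum_j 2 * ((D j - D1) * x j + c j) * dx j + D1 * dw)
  + t ^+ 2 * \sum_j (D j - D1) * dx j ^+ 2.
Proof.
rewrite /gobj /shift !mulrDr !mulr_sumr.
have -> : \sum_j ((D j - D1) * (x j + t * dx j) ^+ 2 + 2 * c j * (x j + t * dx j)) =
    \sum_j ((D j - D1) * x j ^+ 2 + 2 * c j * x j) +
    \sum_j t * (2 * ((D j - D1) * x j + c j) * dx j) +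
    \sum_j t ^+ 2 * ((D j - D1) * dx j ^+ 2).
  by rewrite -!big_split; apply: eq_bigr => j _ /=; ring.
ring.
Qed.

Lemma sqnorm_shift x dx t :
  sqnorm (shift x dx t) = sqnorm x + t * (2 * \sum_j x j * dx j) + t ^+ 2 * sqnorm dx.
Proof.
rewrite /sqnorm /shift !mulr_sumr -!big_split /=.
by apply: eq_bigr => j _; ring.
Qed.

Hypothesis D1_min : forall j, 0 <= D j - D1.

Section Segment.
Variables (xp xq : 'I_n.+1 -> R) (wp wq : R).
Let dx : 'I_n.+1 -> R := fun j => xq j - xp j.
Definition seg_x (t : R) := shift xp dx t.
Definition seg_w (t : R) := wp + t * (wq - wp).

Lemma seg_x1 : seg_x 1 = xq.
Proof. by apply: funext => j; rewrite /seg_x /shift /dx mul1r addrC subrK. Qed.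

Lemma seg_w1 : seg_w 1 = wq.
Proof. by rewrite /seg_w mul1r addrC subrK. Qed.

Lemma in_poly_seg t : in_poly xp wp -> in_poly xq wq -> 0 <= t <= 1 ->
  in_poly (seg_x t) (seg_w t).
Proof.
move=> Pp Pq /andP[t_ge0 t_le1] i; rewrite /seg_x /seg_w constr_shift.
have := constr_shift i xp wp dx (wq - wp) 1; rewrite -/(seg_x 1) -/(seg_w 1) seg_x1 seg_w1 mul1r.
by have := Pp i; have := Pq i; nra.
Qed.

Lemma gobj_seg_le t : 0 <= t <= 1 ->
  gobj (seg_x t) (seg_w t) <= (1 - t) * gobj xp wp + t * gobj xq wq.
Proof.
move=> /andP[t_ge0 t_le1]; rewrite /seg_x /seg_w gobj_shift.
have := gobj_shift xp wp dx (wq - wp) 1; rewrite -/(seg_x 1) -/(seg_w 1) seg_x1 seg_w1 => ->.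
set Q := \sum_j _ * _ ^+ 2.
have Q_ge0 : 0 <= Q by apply: sumr_ge0 => j _; rewrite mulr_ge0 ?sqr_ge0.
rewrite -subr_ge0 (_ : _ - _ = t * (1 - t) * Q); last by ring.
by rewrite !mulr_ge0 // subr_ge0.
Qed.

Lemma seg_crosses : sqnorm xp < wp -> wq <= sqnorm xq ->
  exists2 t, 0 <= t <= 1 & sqnorm (seg_x t) = seg_w t.
Proof.
move=> p_above q_below.
pose A := wp - sqnorm xp.
pose B := wq - wp - 2 * \sum_j xp j * dx j.
have gapE t : seg_w t - sqnorm (seg_x t) = A + t * B - t ^+ 2 * sqnorm dx.
  by rewrite /seg_x sqnorm_shift /seg_w /A /B; ring.
have [t t01 gap0] : exists2 t, t \in `[0, 1] & A + t * B - t ^+ 2 * sqnorm dx = 0.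
  apply: IVT => //; first exact/continuous_subspaceT/quadratic_continuous.
  rewrite /= -!gapE seg_x1 seg_w1 /seg_x /seg_w !mul0r addr0.
  have -> : shift xp dx 0 = xp by apply: funext => j; rewrite /shift mul0r addr0.
  by rewrite ge_min le_max !subr_le0 !subr_ge0 q_below (ltW p_above) orbT.
exists t; first by move: t01; rewrite in_itv.
by apply/eqP; rewrite eq_sym -subr_eq0 gapE gap0.
Qed.
End Segment.

Section ImprovingPoints.
Variables (xp : 'I_n.+1 -> R) (wp : R).
Hypothesis p_relax : in_relax xp wp.
Hypothesis p_beats_P : forall x, in_poly x (sqnorm x) -> gobj xp wp < gobj x (sqnorm x).

Lemma p_strictly_above : sqnorm xp < wp.
Proof.
rewrite lt_neqAle (proj2 p_relax) andbT; apply/eqP => wpE.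
by have := @p_beats_P xp; rewrite wpE => /(_ (proj1 p_relax)); rewrite ltxx.
Qed.

(* Every point of the polyhedron at least as good as (xp, wp) lies strictly
   above the paraboloid: otherwise the segment joining them would cross the
   paraboloid at a feasible point of (P) no worse than (xp, wp). *)
Lemma improving_point_above xq wq : in_poly xq wq -> gobj xq wq <= gobj xp wp ->
  sqnorm xq < wq.
Proof.
move=> Pq q_le_p; rewrite ltNge; apply/negP => q_below.
have [t t01 cross] := seg_crosses p_strictly_above q_below.
have Pt : in_poly (seg_x xp xq t) (sqnorm (seg_x xp xq t)).
  by rewrite cross; exact: in_poly_seg (proj1 p_relax) Pq t01.
have := p_beats_P Pt; rewrite cross ltNge => /negP; apply.
apply: le_trans (gobj_seg_le _ _ _ _ t01) _.
by move: t01 => /andP[t_ge0 t_le1]; nra.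
Qed.
End ImprovingPoints.

(* R^(n+2) viewed as R^(n+1) x R: the coordinate widen1 j carries x j and
   the last coordinate carries w. *)
Definition widen1 (j : 'I_n.+1) : 'I_n.+2 := widen_ord (leqnSn n.+1) j.

Definition pack (T : Type) (x : 'I_n.+1 -> T) (w : T) : 'I_n.+2 -> T :=
  fun k => if (k < n.+1)%N then x (inord k) else w.

Lemma pack_widen1 (T : Type) (x : 'I_n.+1 -> T) w j : pack x w (widen1 j) = x j.
Proof. by rewrite /pack /widen1 /= ltn_ord; congr x; apply: val_inj; rewrite /= inordK. Qed.

Lemma pack_max (T : Type) (x : 'I_n.+1 -> T) w : pack x w ord_max = w.
Proof. by rewrite /pack /= ltnn. Qed.

Lemma dot_pack (x y : 'I_n.+1 -> R) (w v : R) :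
  dot (pack x w) (pack y v) = \sum_j x j * y j + w * v.
Proof.
by rewrite /dot big_ord_recr /= !pack_max; under eq_bigr do rewrite !pack_widen1.
Qed.

Lemma pack_coords (T : Type) (d : 'I_n.+2 -> T) :
  pack (fun j => d (widen1 j)) (d ord_max) = d.
Proof.
apply: funext => k; rewrite /pack; case: ltnP => [k_lt|k_ge]; congr d; apply: val_inj.
  by rewrite /= inordK.
by apply/eqP; rewrite /= eqn_leq k_ge -ltnS ltn_ord.
Qed.

Lemma feasible_descent xs ws dx dw : in_poly xs ws ->
  (forall i, constr i xs ws = 0 -> \sum_j 2 * a i j * dx j + xi i * dw <= 0) ->
  \sum_j 2 * ((D j - D1) * xs j + c j) * dx j + D1 * dw < 0 ->
  exists t, in_poly (shift xs dx t) (ws + t * dw) /\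
            gobj (shift xs dx t) (ws + t * dw) < gobj xs ws.
Proof.
move=> Ps act_dir descent.
set alpha := \sum_j _ + _ in descent; set Q := \sum_j (D j - D1) * dx j ^+ 2.
have Q_ge0 : 0 <= Q by apply: sumr_ge0 => j _; rewrite mulr_ge0 ?sqr_ge0.
pose slope i := \sum_j 2 * a i j * dx j + xi i * dw.
have M0_ge0 : 0 <= 2 * Q / - alpha by rewrite divr_ge0 ?mulr_ge0 // oppr_ge0 ltW.
have [t t_gt0 [t_obj t_cons]] := common_step M0_ge0
  (fun i => step_bound_ge0 (constr i xs ws) (slope i)).
exists t; split=> [i|].
  by rewrite constr_shift; apply: affine_step_le0 => //; exact: act_dir.
by rewrite gobj_shift -/alpha -/Q -addrA gtrDl; exact: quadratic_step_lt0.
Qed.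

(* Karush-Kuhn-Tucker conditions at a minimizer of the lifted objective on the
   polyhedron, obtained from Farkas' lemma applied to the active constraints. *)
Lemma kkt_multipliers xs ws : in_poly xs ws ->
  (forall x w, in_poly x w -> gobj xs ws <= gobj x w) ->
  exists mu : 'I_m -> R, [/\ forall i, 0 <= mu i,
    forall i, mu i != 0 -> constr i xs ws = 0,
    D1 + \sum_i mu i * xi i = 0
  & forall j, (D j - D1) * xs j + c j + \sum_i mu i * a i j = 0].
Proof.
move=> Ps s_min.
pose act := [seq i <- enum 'I_m | constr i xs ws == 0].
have act_mem i : (i \in act) = (constr i xs ws == 0) by rewrite mem_filter mem_enum andbT.
pose v i := pack (fun j => 2 * a i j) (xi i).
pose g := pack (fun j => - (2 * ((D j - D1) * xs j + c j))) (- D1).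
have [[mu [mu_ge0 mu_out g_comb]]|[d [d_act d_desc]]] := farkas act v g.
  exists mu; split=> //.
  - by move=> i mu_i; apply/eqP; rewrite -act_mem; apply: contraNT mu_i => /mu_out ->.
  - have := g_comb ord_max; rewrite /g /v pack_max; under eq_bigr do rewrite pack_max.
    by move=> <-; rewrite addrN.
  - move=> j; have := g_comb (widen1 j); rewrite /g /v pack_widen1.
    under eq_bigr do rewrite pack_widen1.
    have -> : \sum_i mu i * (2 * a i j) = 2 * \sum_i mu i * a i j.
      by rewrite mulr_sumr; apply: eq_bigr => i _; ring.
    move=> comb_j; have : 2 * ((D j - D1) * xs j + c j + \sum_i mu i * a i j) = 0.
      by rewrite mulrDr -comb_j; ring.
    by move/eqP; rewrite mulf_eq0 pnatr_eq0 /= => /eqP.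
exfalso; rewrite -(pack_coords d) in d_act d_desc.
pose dx j := d (widen1 j); pose dw := d ord_max.
have act_dir i : constr i xs ws = 0 -> \sum_j 2 * a i j * dx j + xi i * dw <= 0.
  by move=> act_i; have := d_act i; rewrite act_mem act_i eqxx dot_pack; apply.
have descent : \sum_j 2 * ((D j - D1) * xs j + c j) * dx j + D1 * dw < 0.
  rewrite -oppr_gt0 opprD -sumrN; move: d_desc; rewrite dot_pack mulNr.
  by under eq_bigr do rewrite mulNr.
have [t [Pt t_lt]] := feasible_descent Ps act_dir descent.
by have := s_min _ _ Pt; rewrite leNgt t_lt.
Qed.

Section Boundedness.
Variable ybar : 'I_m -> R.
Hypothesis ybar_ge0 : forall i, 0 <= ybar i.
Hypothesis ybar_xi : 0 < \sum_i ybar i * xi i.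

Let s := \sum_i ybar i * xi i.
Let ab j := \sum_i ybar i * a i j.
Let bb := \sum_i ybar i * b i.

Lemma weighted_constraint x w : in_poly x w -> s * w + 2 * \sum_j ab j * x j <= bb.
Proof.
move=> Pxw; rewrite -subr_le0.
have exch : \sum_j ab j * x j = \sum_i ybar i * \sum_j a i j * x j.
  rewrite /ab; under eq_bigr do rewrite mulr_suml.
  rewrite exchange_big /=; apply: eq_bigr => i _.
  by rewrite mulr_sumr; apply: eq_bigr => j _; rewrite mulrA.
have <- : \sum_i ybar i * constr i x w = s * w + 2 * \sum_j ab j * x j - bb.
  rewrite exch (eq_bigr (fun i => ybar i * xi i * w + 2 * (ybar i * \sum_j a i j * x j)
                                   - ybar i * b i)); last by move=> i _; rewrite constrE; ring.
  by rewrite sumrB big_split /= -mulr_suml -mulr_sumr.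
by apply: sumr_le0 => i _; rewrite mulr_ge0_le0.
Qed.

Let Y := s * bb + \sum_j ab j ^+ 2.
Let A1 := \sum_j `|ab j|.
Let Mx := (1 + `|Y| + A1) / s.
Let Mw := (`|bb| + 2 * Mx * A1) / s.

(* Completing the square in the weighted constraint bounds each coordinate
   of a point of the relaxation. *)
Lemma relax_x_bound x w : in_relax x w -> forall j, `|x j| <= Mx.
Proof.
move=> [Pxw x_below] j.
have sq_sum : \sum_k (s * x k + ab k) ^+ 2 <= Y.
  have -> : \sum_k (s * x k + ab k) ^+ 2 =
      s * (s * sqnorm x + 2 * \sum_k ab k * x k) + \sum_k ab k ^+ 2.
    by rewrite /sqnorm mulrDr !mulr_sumr -!big_split /=; apply: eq_bigr => k _; ring.
  rewrite /Y lerD2r; apply: ler_wpM2l; first exact: ltW.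
  apply: le_trans (weighted_constraint Pxw); rewrite lerD2r.
  by apply: ler_wpM2l; [exact: ltW | exact: x_below].
have sq_j : (s * x j + ab j) ^+ 2 <= Y.
  by apply: le_trans sq_sum; rewrite (bigD1 j) //= lerDl sumr_ge0 // => k _; exact: sqr_ge0.
have ab_j : `|ab j| <= A1 by rewrite /A1 (bigD1 j) //= lerDl sumr_ge0.
have := abs_le_of_sqr sq_j; have := ler_normD (s * x j + ab j) (- ab j).
rewrite normrN addrK normrM (gtr0_norm ybar_xi) -/s /Mx ler_pdivlMr //.
by have := ler_norm Y; rewrite mulrC; lra.
Qed.

(* The weighted constraint then bounds w, which is nonnegative. *)
Lemma relax_w_bound x w : in_relax x w -> `|w| <= Mw.
Proof.
move=> [Pxw x_below]; have w_ge0 : 0 <= w := le_trans (sqnorm_ge0 x) x_below.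
have cross : `|\sum_j ab j * x j| <= Mx * A1.
  apply: le_trans (ler_norm_sum _ _ _) _; rewrite /A1 mulr_sumr; apply: ler_sum => j _.
  by rewrite normrM mulrC; apply: ler_wpM2r => //; exact: relax_x_bound (conj Pxw x_below) j.
have := weighted_constraint Pxw; have := ler_norm bb.
have := ler_norm (- \sum_j ab j * x j); rewrite normrN.
by rewrite (ger0_norm w_ge0) /Mw ler_pdivlMr // mulrC; lra.
Qed.

Lemma in_relax_bounded : exists M, forall x w, in_relax x w ->
  (forall j, `|x j| <= M) /\ `|w| <= M.
Proof.
exists (Num.max Mx Mw) => x w relax_xw; split=> [j|]; rewrite le_max.
  by rewrite (relax_x_bound relax_xw).
by rewrite (relax_w_bound relax_xw) orbT.
Qed.
End Boundedness.

Section Compactness.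
Local Open Scope classical_set_scope.
Local Notation V := 'rV[R]_n.+2.

Definition row_x (z : V) : 'I_n.+1 -> R := fun j => z ord0 (widen1 j).
Definition row_w (z : V) : R := z ord0 ord_max.
Definition to_row (x : 'I_n.+1 -> R) (w : R) : V := \row_k pack x w k.

Lemma row_x_to_row x w : row_x (to_row x w) = x.
Proof. by apply: funext => j; rewrite /row_x mxE pack_widen1. Qed.

Lemma row_w_to_row x w : row_w (to_row x w) = w.
Proof. by rewrite /row_w mxE pack_max. Qed.

Lemma continuous_row_x j : continuous (fun z => row_x z j).
Proof. exact: coord_continuous. Qed.

Lemma continuous_row_w : continuous row_w.
Proof. exact: coord_continuous. Qed.

Lemma continuous_gobj : continuous (fun z => gobj (row_x z) (row_w z)).
Proof.
apply: continuous_add; last exact/continuous_mul/continuous_row_w/cst_continuous.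
apply: continuous_sum => j; apply: continuous_add; apply: continuous_mul;
  try exact: cst_continuous; last exact: continuous_row_x.
by under eq_fun do rewrite expr2; apply: continuous_mul; exact: continuous_row_x.
Qed.

Lemma continuous_constr i : continuous (fun z => constr i (row_x z) (row_w z)).
Proof.
apply: continuous_sub; last exact: cst_continuous.
apply: continuous_add; last exact/continuous_mul/continuous_row_w/cst_continuous.
by apply: continuous_sum => j; apply: continuous_mul; [exact: cst_continuous | exact: continuous_row_x].
Qed.

Lemma continuous_sqnorm_gap : continuous (fun z => sqnorm (row_x z) - row_w z).
Proof.
apply: continuous_sub; last exact: continuous_row_w.
apply: continuous_sum => j; under eq_fun do rewrite expr2.
by apply: continuous_mul; exact: continuous_row_x.
Qed.

Definition relax_rows : set V := [set z | in_relax (row_x z) (row_w z)].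

Lemma relax_rows_closed : closed relax_rows.
Proof.
have -> : relax_rows = \bigcap_(i in [set: 'I_m]) [set z | constr i (row_x z) (row_w z) <= 0]
                      `&` [set z | sqnorm (row_x z) - row_w z <= 0].
  apply/seteqP; split=> z /=; rewrite subr_le0.
    by move=> [Pz z_above]; split=> // i _; exact: Pz.
  by move=> [Pz z_above]; split=> // i; exact: Pz.
apply: closedI; last exact/closed_sublevel/continuous_sqnorm_gap.
by apply: closed_bigI => i _; exact/closed_sublevel/continuous_constr.
Qed.

Section Minimizer.
Variable ybar : 'I_m -> R.
Hypothesis ybar_ge0 : forall i, 0 <= ybar i.
Hypothesis ybar_xi : 0 < \sum_i ybar i * xi i.

Lemma relax_rows_compact : compact relax_rows.
Proof.
have [M M_bound] := in_relax_bounded ybar_ge0 ybar_xi.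
have box : compact [set z : V | forall k, `[-M, M]%classic (z ord0 k)].
  by apply: (@rV_compact _ _ (fun _ => `[-M, M]%classic)) => _; exact: segment_compact.
apply: (subclosed_compact relax_rows_closed box) => z /= /M_bound [x_bound w_bound] k.
rewrite /= in_itv /= -ler_norml.
have -> : z ord0 k = pack (row_x z) (row_w z) k by rewrite /row_x /row_w (pack_coords (z ord0)).
by rewrite /pack; case: ifP => _; [exact: x_bound | exact: w_bound].
Qed.

Lemma exists_minimizer xp wp : in_relax xp wp ->
  exists xs ws, in_relax xs ws /\ forall x w, in_relax x w -> gobj xs ws <= gobj x w.
Proof.
move=> relax_p.
have nonempty : relax_rows !=set0.
  by exists (to_row xp wp); rewrite /relax_rows /= row_x_to_row row_w_to_row.
have [z z_relax z_min] :=
  compact_EVT_min nonempty relax_rows_compact (continuous_subspaceT continuous_gobj).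
exists (row_x z), (row_w z); split; first by move: z_relax; rewrite inE.
move=> x w relax_xw; have := z_min (to_row x w); rewrite row_x_to_row row_w_to_row; apply.
by rewrite inE /relax_rows /= row_x_to_row row_w_to_row.
Qed.
End Minimizer.
End Compactness.

Definition set_first (x : 'I_n.+1 -> R) (u : R) : 'I_n.+1 -> R :=
  fun j => if j == ord0 then u else x j.

Lemma set_first_id x : set_first x (x ord0) = x.
Proof. by apply: funext => j; rewrite /set_first; case: eqP => // ->. Qed.

Lemma sum_set_first (F : 'I_n.+1 -> R -> R) x u :
  \sum_j F j (set_first x u j) = F ord0 u + \sum_(j | j != ord0) F j (x j).
Proof.
rewrite (bigD1 ord0) //= /set_first eqxx; congr (_ + _).
by apply: eq_bigr => j /negbTE ->.
Qed.

Lemma sum_set_first_diff (F : 'I_n.+1 -> R -> R) x u :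
  \sum_j F j (set_first x u j) = \sum_j F j (x j) + (F ord0 u - F ord0 (x ord0)).
Proof. by rewrite sum_set_first [in RHS](bigD1 ord0) //=; ring. Qed.

Lemma constr_set_first i x w u v :
  constr i (set_first x u) v = constr i x w + 2 * a i ord0 * (u - x ord0) + xi i * (v - w).
Proof.
by rewrite /constr (sum_set_first_diff (fun j y => 2 * a i j * y)) /=; ring.
Qed.

Lemma gobj_set_first x w u v :
  gobj (set_first x u) v = gobj x w + 2 * c ord0 * (u - x ord0) + D1 * (v - w).
Proof.
rewrite /gobj (sum_set_first_diff (fun j y => (D j - D1) * y ^+ 2 + 2 * c j * y)) /=.
by rewrite subrr !mul0r !add0r; ring.
Qed.

Lemma sqnorm_set_first x u :
  sqnorm (set_first x u) = u ^+ 2 + \sum_(j | j != ord0) x j ^+ 2.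
Proof. exact: (sum_set_first (fun _ y => y ^+ 2)). Qed.

Section KKTFace.
Variables (xs : 'I_n.+1 -> R) (ws : R) (mu : 'I_m -> R).
Hypothesis mu_compl : forall i, mu i != 0 -> constr i xs ws = 0.
Hypothesis stat_w : D1 + \sum_i mu i * xi i = 0.
Hypothesis stat_x : forall j, (D j - D1) * xs j + c j + \sum_i mu i * a i j = 0.

Definition slice_constr (i : 'I_m) (u v : R) : R := constr i (set_first xs u) v.

Lemma slice_constr_affine i u v du dv t :
  slice_constr i (u + t * du) (v + t * dv) =
  slice_constr i u v + t * (2 * a i ord0 * du + xi i * dv).
Proof. by rewrite /slice_constr !(constr_set_first i xs ws); ring. Qed.

(* By complementary slackness and stationarity, the objective is constant on
   the face. *)
Lemma gobj_on_face u v : (forall i, mu i != 0 -> slice_constr i u v = 0) ->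
  gobj (set_first xs u) v = gobj xs ws.
Proof.
move=> on_face; rewrite (gobj_set_first xs ws).
have c1E : c ord0 = - \sum_i mu i * a i ord0.
  by have := stat_x ord0; rewrite subrr mul0r add0r => /eqP; rewrite addr_eq0 => /eqP.
have D1E : D1 = - \sum_i mu i * xi i by apply/eqP; rewrite -addr_eq0 stat_w.
have : \sum_i mu i * (slice_constr i u v - constr i xs ws) = 0.
  apply: big1 => i _; have [->|mu_i] := eqVneq (mu i) 0; first by rewrite mul0r.
  by rewrite on_face // mu_compl // subrr mulr0.
rewrite (eq_bigr (fun i => 2 * (u - xs ord0) * (mu i * a i ord0) + (v - ws) * (mu i * xi i)));
  last by move=> i _; rewrite /slice_constr (constr_set_first i xs ws); ring.
rewrite big_split /= -!mulr_sumr c1E D1E => face0.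
transitivity (gobj xs ws - (2 * (u - xs ord0) * \sum_i mu i * a i ord0 +
                            (v - ws) * \sum_i mu i * xi i)); first by ring.
by rewrite face0 subr0.
Qed.

(* Stationarity in x_j, j <> 1, says that x_j(mu) = xs_j. *)
Lemma xmu_kkt j : D1 < D j -> xmu D c a mu j = xs j.
Proof.
move=> D1_lt; rewrite /xmu /d1.
have cj : c j + \sum_i a i j * mu i = - ((D j - D1) * xs j).
  apply: (addrI ((D j - D1) * xs j)); rewrite subrr addrA.
  by under eq_bigr do rewrite mulrC; exact: stat_x.
by rewrite cj opprK mulrC mulKf // subr_eq0 gt_eqF.
Qed.

Section UniqueMinimalEigenvalue.
Hypothesis D1_unique : forall j, j != ord0 -> D1 < D j.

Lemma slice_constr_xmu i u v : slice_constr i u v =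
  xi i * v + 2 * a i ord0 * u + 2 * \sum_(j | j != ord0) a i j * xmu D c a mu j - b i.
Proof.
rewrite /slice_constr /constr (sum_set_first (fun j y => 2 * a i j * y)) /=.
have -> : \sum_(j | j != ord0) 2 * a i j * xs j =
    2 * \sum_(j | j != ord0) a i j * xmu D c a mu j.
  by rewrite mulr_sumr; apply: eq_bigr => j j0; rewrite xmu_kkt ?D1_unique // mulrA.
ring.
Qed.

Lemma sub_obj_slice u v : sub_obj D c a mu u v = sqnorm (set_first xs u) - v.
Proof.
rewrite /sub_obj sqnorm_set_first [u ^+ 2 + _]addrC; congr (_ + _ - _).
by apply: eq_bigr => j j0; rewrite xmu_kkt ?D1_unique.
Qed.

Lemma sub_feas_on_face u v : (forall i, 0 <= mu i) -> on_face slice_constr mu u v ->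
  sub_feas D c a b xi (active slice_constr u v) mu u v.
Proof.
move=> mu_ge0 [face_le face_eq].
set I := active slice_constr u v.
have mu_out i : i \notin I -> mu i = 0.
  by move=> i_out; apply/eqP; apply: contraNT i_out => /face_eq act; rewrite inE act.
have sum_I (F : 'I_m -> R) : \sum_(i in I) F i * mu i = \sum_i mu i * F i.
  rewrite [RHS](bigID (mem I)) /= [X in _ + X]big1 ?addr0 => [|i /mu_out ->]; last exact: mul0r.
  by apply: eq_bigr => i _; rewrite mulrC.
split=> //; split.
- by rewrite /d1 sum_I.
- by rewrite sum_I; have := stat_x ord0; rewrite subrr mul0r add0r.
- by move=> i; rewrite inE => /eqP; rewrite slice_constr_xmu => /eqP; rewrite subr_eq0 => /eqP.
- by move=> i _; have := face_le i; rewrite slice_constr_xmu subr_le0.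
- by move=> i _; exact: mu_ge0.
Qed.
End UniqueMinimalEigenvalue.
End KKTFace.

Hypothesis D1_unique : forall j, j != ord0 -> D1 < D j.
Hypothesis sub_val_ge0 : forall I : {set 'I_m}, (2 <= #|I|)%N -> (0 <= sub_val D c a b xi I)%E.

Section Contradiction.
Variables (xp : 'I_n.+1 -> R) (wp : R).
Hypothesis p_relax : in_relax xp wp.
Hypothesis p_beats_P : forall x, in_poly x (sqnorm x) -> gobj xp wp < gobj x (sqnorm x).

(* A minimizer of the objective on the relaxation minimizes it on the whole
   polyhedron, since better points of the polyhedron lie in the relaxation. *)
Lemma minimizer_on_polyhedron xs ws :
  (forall x w, in_relax x w -> gobj xs ws <= gobj x w) ->
  forall x w, in_poly x w -> gobj xs ws <= gobj x w.
Proof.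
move=> s_min x w Pxw; rewrite leNgt; apply/negP => lt_s.
have above := improving_point_above p_relax p_beats_P Pxw (ltW (lt_le_trans lt_s (s_min _ _ p_relax))).
by have := s_min x w (conj Pxw (ltW above)); rewrite leNgt lt_s.
Qed.

Variables (xs : 'I_n.+1 -> R) (ws : R) (mu : 'I_m -> R).
Hypothesis s_poly : in_poly xs ws.
Hypothesis s_le_p : gobj xs ws <= gobj xp wp.
Hypothesis mu_ge0 : forall i, 0 <= mu i.
Hypothesis mu_compl : forall i, mu i != 0 -> constr i xs ws = 0.
Hypothesis stat_w : D1 + \sum_i mu i * xi i = 0.
Hypothesis stat_x : forall j, (D j - D1) * xs j + c j + \sum_i mu i * a i j = 0.

Lemma face_above u v : on_face (slice_constr xs) mu u v -> u ^+ 2 < v.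
Proof.
move=> [face_le face_eq].
have := improving_point_above p_relax p_beats_P (face_le : in_poly (set_first xs u) v).
rewrite (gobj_on_face mu_compl stat_w stat_x face_eq) => /(_ s_le_p).
rewrite sqnorm_set_first; apply: le_lt_trans.
by rewrite lerDl sumr_ge0 // => j _; exact: sqr_ge0.
Qed.

Lemma vertex_violates_subproblem : False.
Proof.
have face_s : on_face (slice_constr xs) mu (xs ord0) ws.
  by split=> i; rewrite /slice_constr set_first_id; [exact: s_poly | exact: mu_compl].
have [u [v [face_uv two_active]]] := face_vertex (slice_constr_affine xs ws) face_above face_s.
have feas := sub_feas_on_face stat_w stat_x D1_unique mu_ge0 face_uv.
have obj_lt0 : sub_obj D c a mu u v < 0.
  rewrite (sub_obj_slice stat_x D1_unique) subr_lt0.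
  apply: (improving_point_above p_relax p_beats_P (proj1 face_uv)).
  by rewrite (gobj_on_face mu_compl stat_w stat_x (proj2 face_uv)).
have : (sub_val D c a b xi (active (slice_constr xs) u v) <= (sub_obj D c a mu u v)%:E)%E.
  by apply: ereal_inf_lbound; exists (mu, u, v).
by move/(le_trans (sub_val_ge0 two_active)); rewrite lee_fin leNgt obj_lt0.
Qed.
End Contradiction.

Lemma cstar_le_relax (ybar : 'I_m -> R) :
  (forall i, 0 <= ybar i) -> 0 < \sum_i ybar i * xi i ->
  forall x w, in_relax x w -> (cstar D c a b xi <= (gobj x w)%:E)%E.
Proof.
move=> ybar_ge0 ybar_xi xp wp relax_p; rewrite leNgt; apply/negP => gap.
have p_beats_P x : in_poly x (sqnorm x) -> gobj xp wp < gobj x (sqnorm x).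
  move=> Px; rewrite -lte_fin; apply: lt_le_trans gap _; rewrite -qobj_gobj.
  by apply: ereal_inf_lbound; exists x => //; exact/Pfeas_in_poly.
have [xs [ws [[s_poly _] s_min]]] := exists_minimizer ybar_ge0 ybar_xi relax_p.
have [mu [mu_ge0 mu_compl stat_w stat_x]] :=
  kkt_multipliers s_poly (minimizer_on_polyhedron relax_p p_beats_P s_min).
exact: (vertex_violates_subproblem relax_p p_beats_P s_poly (s_min _ _ relax_p)
          mu_ge0 mu_compl stat_w stat_x).
Qed.
End LiftedProblem.

Lemma psd_diag (R : realType) n (M : 'M[R]_n.+1) j : psd M -> 0 <= M j j.
Proof.
move=> M_psd; have := M_psd (delta_mx j 0).
by rewrite trmx_delta -rowE -row_mul -colE !mxE.
Qed.

Section ShorRelaxation.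
Variables (R : realType) (n m : nat).
Variables (D c : 'I_n.+1 -> R) (a : 'I_m -> 'I_n.+1 -> R) (b xi : 'I_m -> R).

Lemma vstar_le_cstar : (vstar D c a b xi <= cstar D c a b xi)%E.
Proof.
apply/ereal_infP => _ [x Px <-]; apply: ereal_inf_lbound; exists (x, outer x).
  split=> /=.
  - by apply/matrixP => i j; rewrite !mxE mulrC.
  - move=> i; have := Px i.
    suff -> : \tr (outer x) = \sum_j x j ^+ 2 by [].
    by apply: eq_bigr => j _; rewrite mxE expr2.
  - by move=> v; rewrite subrr mulmx0 mul0mx mxE.
rewrite /shor_obj /qobj; congr (_ + _)%:E.
by apply: eq_bigr => j _; rewrite mxE expr2.
Qed.

Section ShorPoint.
Variables (x : 'I_n.+1 -> R) (X : 'M[R]_n.+1).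
Hypothesis shor_xX : Shor_feas a b xi x X.

Lemma shor_diag j : x j ^+ 2 <= X j j.
Proof.
by case: shor_xX => _ _ /(psd_diag j); rewrite !mxE subr_ge0 expr2.
Qed.

Lemma shor_point_in_relax : in_relax a b xi x (\tr X).
Proof.
case: shor_xX => _ shor_cons _; split=> [i|]; first by rewrite constrE subr_le0.
by apply: ler_sum => j _; exact: shor_diag.
Qed.

Lemma gobj_le_shor_obj : (forall j, 0 <= D j - D ord0) ->
  gobj D c x (\tr X) <= shor_obj D c x X.
Proof.
move=> D1_min; rewrite -subr_ge0.
have -> : shor_obj D c x X - gobj D c x (\tr X) =
    \sum_j (D j - D ord0) * (X j j - x j ^+ 2).
  by rewrite /shor_obj /gobj /mxtrace !mulr_sumr -!big_split /= -sumrB; apply: eq_bigr => j _; ring.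
by apply: sumr_ge0 => j _; rewrite mulr_ge0 // subr_ge0 shor_diag.
Qed.
End ShorPoint.
End ShorRelaxation.

Theorem mainTheorem13 (R : realType) (n m : nat)
  (D c : 'I_n.+1 -> R) (a : 'I_m -> 'I_n.+1 -> R) (b xi : 'I_m -> R) :
  assumption1 a b xi ->
  (forall j : 'I_n.+1, j != ord0 -> D ord0 < D j) ->
  (forall I : {set 'I_m}, (2 <= #|I|)%N -> (0 <= sub_val D c a b xi I)%E) ->
  vstar D c a b xi = cstar D c a b xi.
Proof.
move=> [_ [ybar [ybar_ge0 ybar_xi]] _] D1_unique sub_val_ge0.
have D1_min j : 0 <= D j - D ord0.
  by have [->|/D1_unique/ltW] := eqVneq j ord0; rewrite ?subrr // subr_ge0.
apply: le_anti; rewrite vstar_le_cstar /=.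
apply/ereal_infP => _ [[x X] /= shor_xX <-].
apply: le_trans (cstar_le_relax D1_min D1_unique sub_val_ge0 ybar_ge0 ybar_xi
                   (shor_point_in_relax shor_xX)) _.
by rewrite lee_fin; exact: gobj_le_shor_obj shor_xX D1_min.
Qed.
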